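(* Let $f:\mathbb{R}^n\to\mathbb{R}$ be bounded below, and suppose $\nabla f$ is Lipschitz continuous with constant $L$ on a (sufficiently large) open bounded domain $\mathcal{X}\subset\mathbb{R}^n$. Let $q=(n^2+3n)/2$ and let $n<p<q$. Let $\delta>0$ and let $\mathcal{Y}=\{y^0,y^1,\dots,y^p\}\subset\overline{B}(y^0,\delta)$. Let $\mathrm{m}$ be a quadratic polynomial in $n$ variables and suppose there is a constant $\kappa\ge 0$ such that $|\mathrm{m}(y^j)-f(y^j)|\le\kappa\delta^2$ for every $y^j\in\mathcal{Y}$. Let $\mathbf{L}_s\in\mathbb{R}^{p\times n}$ be the matrix whose $i$-th row is $(y^i-y^0)^T$, $i=1,\dots,p$, and let $\hat{\mathbf{L}}_s=\frac{1}{\delta}\mathbf{L}_s$. Assume that $\mathbf{L}_s$ has full column rank ($\operatorname{rank}(\mathbf{L}_s)=n$) and that there is a constant $\kappa_s>0$ with $\|\hat{\mathbf{L}}_s^{\dagger}\|\le\kappa_s$, where $\hat{\mathbf{L}}_s^{\dagger}$ is the Moore--Penrose pseudo-inverse of $\hat{\mathbf{L}}_s$. Assume also that the (constant) Hessian $\mathbf{H}=\nabla^2\mathrm{m}$ of the model satisfies $\|\mathbf{H}\|\le\kappa_H$ for some constant $\kappa_H\ge 0$. Then for all $x\in\mathcal{X}\cap\overline{B}(y^0,\delta)$, \[ |f(x)-\mathrm{m}(x)|\le\Big(\tfrac12(L+\kappa_H)+\kappa+2\kappa_s\sqrt{p}\,\big(L+\kappa+\tfrac34\kappa_H\big)\Big)\delta^2,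 \] \[ \|\nabla f(x)-\nabla\mathrm{m}(x)\|\le 2\kappa_s\sqrt{p}\,\big(L+\kappa+\tfrac34\kappa_H\big)\delta. \]
   Context: $\overline{B}(x,\delta)$ denotes the closed Euclidean ball of center $x$ and radius $\delta$; $\|\cdot\|$ is the Euclidean vector norm and the induced (spectral) matrix norm. $q+1=(n+1)(n+2)/2$ is the dimension of the space of polynomials of degree at most $2$ in $n$ variables. *)

From HB Require Import structures.
From mathcomp Require Import all_boot all_order all_algebra.
From mathcomp Require Import all_classical all_reals all_analysis.
Set Implicit Arguments. Unset Strict Implicit. Unset Printing Implicit Defensive.
Import Order.TTheory GRing.Theory Num.Theory.
Import numFieldNormedType.Exports.
Local Open Scope classical_set_scope.
Local Open Scope ring_scope.

Definition enorm (R : realType) (m k : nat) (A : 'M[R]_(m, k)) : R :=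
  Num.sqrt (\sum_(i < m) \sum_(j < k) A i j ^+ 2).

Definition specnorm (R : realType) (m k : nat) (A : 'M[R]_(m, k)) : R :=
  sup [set enorm (A *m v) | v in [set v : 'cV[R]_k | enorm v <= 1]].

Definition is_MP_pinv (R : realType) (m k : nat) (A : 'M[R]_(m, k))
  (P : 'M[R]_(k, m)) : Prop :=
  [/\ A *m P *m A = A, P *m A *m P = P,
      (A *m P)^T = A *m P & (P *m A)^T = P *m A].

Definition grad (R : realType) (n : nat) (f : 'rV[R]_n -> R) (x : 'rV[R]_n)
  : 'rV[R]_n :=
  \row_(i < n) ('D_(delta_mx 0 i : 'rV[R]_n) f x).

(* A general quadratic polynomial in n variables:
   m(x) = c + g x^T + 1/2 x H x^T with H symmetric (H is its Hessian). *)
Definition quad_model (R : realType) (n : nat) (c : R) (g : 'rV[R]_n)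
  (H : 'M[R]_n) (x : 'rV[R]_n) : R :=
  c + (g *m x^T) 0 0 + 2^-1 * (x *m H *m x^T) 0 0.

From HB Require Import structures.
From mathcomp Require Import all_boot all_order all_algebra.
From mathcomp Require Import all_classical all_reals all_analysis.
From mathcomp Require Import ring lra.
Import Order.TTheory GRing.Theory Num.Theory.
Import numFieldNormedType.Exports.
Local Open Scope classical_set_scope.
Local Open Scope ring_scope.
Set Implicit Arguments. Unset Strict Implicit. Unset Printing Implicit Defensive.

(* Write e := f - m.  Its gradient is (L + kappa_H)-Lipschitz on the ball B(y^0, delta)
   (f contributes L, the model kappa_H), so the first-order Taylor remainder of e over a
   step d is at most (L + kappa_H)/2 |d|^2.  Expanding e around y^0 and using
   |e(y^j)| <= kappa delta^2 bounds the dot product of grad e(x) with each sample direction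
   y^i - y^0 by 2 (L + kappa + 3/4 kappa_H) delta^2, i.e. each entry of Lhat grad e(x)^T by
   that constant times delta.  As Lhat has full column rank, its pseudo-inverse is a left
   inverse, which recovers grad e(x) at the cost of the factor kappa_s sqrt p.  A last
   Taylor expansion from x back to y^0 turns this into the bound on e(x). *)

Section EuclideanNorm.
Variable R : realType.

Lemma sum_mul_sqr_le (I : finType) (a b : I -> R) :
  (\sum_i a i * b i) ^+ 2 <= (\sum_i a i ^+ 2) * (\sum_i b i ^+ 2).
Proof.
set sa := \sum_i a i ^+ 2; set sb := \sum_i b i ^+ 2; set sab := \sum_i a i * b i.
have sa_ge0 : 0 <= sa by apply: sumr_ge0 => i _; apply: sqr_ge0.
have [sa0 | sa_gt0] := eqVneq sa 0.
  have a0 i : a i = 0.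
    apply/eqP; rewrite -sqrf_eq0; apply/eqP.
    exact: (psumr_eq0P (fun i _ => sqr_ge0 (a i)) sa0).
  by rewrite /sab big1 ?expr0n ?sa0 ?mul0r // => i _; rewrite a0 mul0r.
have : 0 <= sa * (sa * sb - sab ^+ 2).
  have -> : sa * (sa * sb - sab ^+ 2) = \sum_i (sab * a i - sa * b i) ^+ 2.
    rewrite (eq_bigr (fun i => sab ^+ 2 * a i ^+ 2 - (2 * sab * sa) * (a i * b i)
                               + sa ^+ 2 * b i ^+ 2)); last by move=> i _; ring.
    rewrite big_split sumrB /= -!mulr_sumr -/sa -/sb -/sab; ring.
  by apply: sumr_ge0 => i _; apply: sqr_ge0.
by rewrite pmulr_rge0 ?lt_def ?sa_gt0 // subr_ge0 mulrC.
Qed.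

Lemma enorm_ge0 m k (A : 'M[R]_(m, k)) : 0 <= enorm A.
Proof. exact: sqrtr_ge0. Qed.

Lemma enorm_sqr m k (A : 'M[R]_(m, k)) :
  enorm A ^+ 2 = \sum_(i < m) \sum_(j < k) A i j ^+ 2.
Proof.
by rewrite sqr_sqrtr //; apply: sumr_ge0 => i _; apply: sumr_ge0 => j _; apply: sqr_ge0.
Qed.

Lemma enorm_le m k (A : 'M[R]_(m, k)) (c : R) :
  0 <= c -> \sum_(i < m) \sum_(j < k) A i j ^+ 2 <= c ^+ 2 -> enorm A <= c.
Proof. by move=> c_ge0; rewrite -enorm_sqr ler_pXn2r // nnegrE enorm_ge0. Qed.

Lemma enorm0 m k : enorm (0 : 'M[R]_(m, k)) = 0.
Proof.
by rewrite /enorm big1 ?sqrtr0 // => i _; rewrite big1 // => j _; rewrite mxE expr0n.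
Qed.

Lemma enormZ m k (a : R) (A : 'M[R]_(m, k)) : enorm (a *: A) = `|a| * enorm A.
Proof.
rewrite /enorm -sqrtr_sqr -sqrtrM ?sqr_ge0 // mulr_sumr; congr Num.sqrt.
by apply: eq_bigr => i _; rewrite mulr_sumr; apply: eq_bigr => j _; rewrite mxE exprMn.
Qed.

Lemma enormN m k (A : 'M[R]_(m, k)) : enorm (- A) = enorm A.
Proof. by rewrite -scaleN1r enormZ normrN normr1 mul1r. Qed.

Lemma enorm_tr m k (A : 'M[R]_(m, k)) : enorm A^T = enorm A.
Proof.
rewrite /enorm exchange_big; congr Num.sqrt.
by apply: eq_bigr => i _; apply: eq_bigr => j _; rewrite mxE.
Qed.

Lemma enorm_mx11 (A : 'M[R]_1) : enorm A = `|A 0 0|.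
Proof. by rewrite /enorm !big_ord1 sqrtr_sqr. Qed.

Lemma enormD m k (A B : 'M[R]_(m, k)) : enorm (A + B) <= enorm A + enorm B.
Proof.
apply: enorm_le; first by rewrite addr_ge0 ?enorm_ge0.
set D := \sum_i \sum_j A i j * B i j.
have D_le : D <= enorm A * enorm B.
  have : D ^+ 2 <= (enorm A * enorm B) ^+ 2.
    by rewrite exprMn !enorm_sqr /D !pair_bigA; exact: sum_mul_sqr_le.
  rewrite -[D ^+ 2]real_normK ?num_real // ler_pXn2r ?nnegrE ?mulr_ge0 ?enorm_ge0 //.
  exact: le_trans (ler_norm D).
have -> : \sum_i \sum_j (A + B) i j ^+ 2
          = enorm A ^+ 2 + 2 * D + enorm B ^+ 2.
  rewrite !enorm_sqr /D mulr_sumr -!big_split; apply: eq_bigr => i _.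
  by rewrite mulr_sumr -!big_split; apply: eq_bigr => j _; rewrite /= mxE; ring.
rewrite sqrrD; lra.
Qed.

Lemma enorm_mulmx_le m k l (A : 'M[R]_(m, k)) (B : 'M[R]_(k, l)) :
  enorm (A *m B) <= enorm A * enorm B.
Proof.
apply: enorm_le; first by rewrite mulr_ge0 ?enorm_ge0.
rewrite exprMn !enorm_sqr mulr_suml; apply: ler_sum => i _.
rewrite exchange_big /= mulr_sumr; apply: ler_sum => j _.
by rewrite mxE; exact: sum_mul_sqr_le.
Qed.

Definition vdot n (u v : 'rV[R]_n) : R := (u *m v^T) 0 0.

Lemma vdotC n (u v : 'rV[R]_n) : vdot u v = vdot v u.
Proof. by rewrite /vdot -[u *m _]trmxK trmx_mul trmxK mxE. Qed.

Lemma vdotDl n (u v w : 'rV[R]_n) : vdot (u + v) w = vdot u w + vdot v w.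
Proof. by rewrite /vdot mulmxDl mxE. Qed.

Lemma vdotZl n a (u w : 'rV[R]_n) : vdot (a *: u) w = a * vdot u w.
Proof. by rewrite /vdot -scalemxAl mxE. Qed.

Lemma vdotBl n (u v w : 'rV[R]_n) : vdot (u - v) w = vdot u w - vdot v w.
Proof. by rewrite -scaleN1r vdotDl vdotZl mulN1r. Qed.

Lemma vdotDr n (u v w : 'rV[R]_n) : vdot u (v + w) = vdot u v + vdot u w.
Proof. by rewrite vdotC vdotDl !(vdotC u). Qed.

Lemma vdotZr n a (u w : 'rV[R]_n) : vdot u (a *: w) = a * vdot u w.
Proof. by rewrite vdotC vdotZl vdotC. Qed.

Lemma vdot_le n (u v : 'rV[R]_n) : `|vdot u v| <= enorm u * enorm v.
Proof. by rewrite -enorm_mx11 -(enorm_tr v); apply: enorm_mulmx_le. Qed.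

Lemma enorm_mulmx_specnorm m k (A : 'M[R]_(m, k)) (v : 'cV[R]_k) :
  enorm (A *m v) <= specnorm A * enorm v.
Proof.
have [v0 | v_neq0] := eqVneq (enorm v) 0.
  by apply: le_trans (enorm_mulmx_le A v) _; rewrite v0 !mulr0.
have v_gt0 : 0 < enorm v by rewrite lt_def v_neq0 enorm_ge0.
set w := (enorm v)^-1 *: v.
have w1 : enorm w = 1 by rewrite enormZ ger0_norm ?invr_ge0 ?enorm_ge0 // mulVf.
have Aw_le : enorm (A *m w) <= specnorm A.
  apply: ub_le_sup; last by exists w => //=; rewrite w1.
  exists (enorm A) => _ [u /= u1 <-].
  by apply: le_trans (enorm_mulmx_le A u) _; rewrite ler_piMr ?enorm_ge0.
have -> : A *m v = enorm v *: (A *m w) by rewrite -scalemxAr scalerA divff ?scale1r.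
by rewrite enormZ ger0_norm ?enorm_ge0 // mulrC ler_wpM2r ?enorm_ge0.
Qed.

Lemma enorm_delta n (j : 'I_n) : enorm (delta_mx 0 j : 'rV[R]_n) = 1.
Proof.
rewrite /enorm big_ord1 (bigD1 j) //= big1 ?addr0 ?mxE ?eqxx ?expr1n ?sqrtr1 //.
by move=> i /negbTE ji; rewrite mxE ji andbF expr0n.
Qed.

Lemma enorm_col_le p (u : 'cV[R]_p) (c : R) :
  0 <= c -> (forall i, `|u i 0| <= c) -> enorm u <= Num.sqrt p%:R * c.
Proof.
move=> c_ge0 u_le; apply: enorm_le; first by rewrite mulr_ge0 ?sqrtr_ge0.
rewrite exprMn sqr_sqrtr ?ler0n // mulr_natl -[X in _ *+ X]card_ord -sumr_const.
apply: ler_sum => i _; rewrite big_ord1 -real_normK ?num_real //.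
by rewrite ler_pXn2r ?nnegrE ?normr_ge0.
Qed.

Lemma enorm_mulmx_specnorm_tr m k (u : 'rV[R]_m) (A : 'M[R]_(m, k)) :
  enorm (u *m A) <= specnorm A^T * enorm u.
Proof. by rewrite -enorm_tr trmx_mul -(enorm_tr u); apply: enorm_mulmx_specnorm. Qed.

End EuclideanNorm.

Section PseudoInverse.
Variable R : realType.

Lemma mulmx_trmx_eq0 m k (M : 'M[R]_(m, k)) : M *m M^T = 0 -> M = 0.
Proof.
move=> MMt0; apply/matrixP => i j; rewrite mxE; apply/eqP; rewrite -sqrf_eq0; apply/eqP.
have row_sqr_sum : \sum_l M i l ^+ 2 = (M *m M^T) i i.
  by rewrite mxE; apply: eq_bigr => l _; rewrite mxE expr2.
have row_sum0 : \sum_l M i l ^+ 2 = 0 by rewrite row_sqr_sum MMt0 mxE.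
exact: (psumr_eq0P (fun l _ => sqr_ge0 (M i l)) row_sum0).
Qed.

Lemma trmx_mulmx_unit p n (B : 'M[R]_(p, n)) : \rank B = n -> B^T *m B \in unitmx.
Proof.
move=> rkB; rewrite -row_free_unit -kermx_eq0; apply/eqP.
set K := kermx (B^T *m B).
have KBtB0 : K *m (B^T *m B) = 0 by apply/sub_kermxP.
have KBt0 : K *m B^T = 0.
  by apply: mulmx_trmx_eq0; rewrite trmx_mul trmxK mulmxA -(mulmxA K) KBtB0 mul0mx.
by apply/eqP; rewrite -(mulmx_free_eq0 K (B := B^T)) ?KBt0 // /row_free mxrank_tr rkB.
Qed.

Lemma pinv_full_col_rank p n (A : 'M[R]_(p, n)) : \rank A = n ->
  exists P, is_MP_pinv A P /\ P *m A = 1%:M.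
Proof.
move=> rkA; have AtA_unit := trmx_mulmx_unit rkA.
set P := invmx (A^T *m A) *m A^T.
have PA : P *m A = 1%:M by rewrite -mulmxA mulVmx.
exists P; split=> //; split.
- by rewrite -mulmxA PA mulmx1.
- by rewrite PA mul1mx.
- by rewrite /P !trmx_mul trmxK trmx_inv trmx_mul trmxK mulmxA.
- by rewrite PA trmx1.
Qed.

Lemma enorm_le_rows_vdot p n (D : 'M[R]_(p, n)) (P : 'M[R]_(n, p))
    (v : 'rV[R]_n) (kappa_s eps : R) :
  P *m D = 1%:M -> specnorm P <= kappa_s -> 0 <= kappa_s -> 0 <= eps ->
  (forall i, `|vdot v (row i D)| <= eps) ->
  enorm v <= kappa_s * (Num.sqrt p%:R * eps).
Proof.
move=> PD P_le ks_ge0 eps_ge0 rows_le.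
have -> : v = (P *m (D *m v^T))^T by rewrite mulmxA PD mul1mx trmxK.
rewrite enorm_tr; apply: le_trans (enorm_mulmx_specnorm _ _) _.
apply: le_trans (ler_wpM2r (enorm_ge0 _) P_le) _; rewrite ler_wpM2l //.
apply: enorm_col_le => // i; have := rows_le i.
by rewrite vdotC /vdot -row_mul mxE.
Qed.

End PseudoInverse.

Section MeanValue.
Variable R : realType.

Lemma MVT_le (phi dphi : R -> R) (K : R) :
  (forall t : R, 0 <= t <= 1 -> is_derive t 1 phi (dphi t)) ->
  (forall t : R, 0 <= t <= 1 -> dphi t <= K) ->
  phi 1 - phi 0 <= K.
Proof.
move=> phi' dphi_le.
have [c /andP[]] : exists2 c, c \in `[0, 1] & phi 1 - phi 0 = dphi c * (1 - 0).
  apply: MVT_segment => //.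
    by move=> t; rewrite in_itv /= => /andP[t0 t1]; apply: phi'; rewrite !ltW.
  apply: derivable_within_continuous => t; rewrite in_itv /= => /andP[t0 t1].
  by have [] := phi' t; rewrite ?t0 ?t1.
by rewrite !bnd_simp => c0 c1 ->; rewrite subr0 mulr1 dphi_le ?c0.
Qed.

Lemma MVT_linear_dev_le (phi dphi : R -> R) (C B : R) :
  (forall t : R, 0 <= t <= 1 -> is_derive t 1 phi (dphi t)) ->
  (forall t : R, 0 <= t <= 1 -> `|dphi t - C| <= B * t) ->
  `|phi 1 - phi 0 - C| <= B / 2.
Proof.
move=> phi' dphi_near.
(* [e * phi s - (e C s + B s^2 / 2)] is nonincreasing on [0, 1]; [e = 1] and [e = -1]
   give the two sides of the bound. *)
have signed_dev_le (e : R) :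
    (forall t : R, 0 <= t <= 1 -> e * (dphi t - C) <= B * t) ->
    e * (phi 1 - phi 0 - C) <= B / 2.
  move=> dev_le.
  have psi' (t : R) : 0 <= t <= 1 ->
      is_derive t 1 (fun s => e * phi s - (e * C * s + B / 2 * s ^+ 2))
                    (e * dphi t - (e * C + B * t)).
    move=> t01; apply: is_derive_eq (is_deriveB (is_deriveZ e (phi' t t01))
      (is_deriveD (is_deriveZ (e * C) (is_derive_id t 1))
                  (is_deriveZ (B / 2) (is_deriveX 2 (is_derive_id t 1))))) _.
    by rewrite /GRing.scale /= !mulr1 expr1; field.
  suff : e * phi 1 - (e * C * 1 + B / 2 * 1 ^+ 2)
         - (e * phi 0 - (e * C * 0 + B / 2 * 0 ^+ 2)) <= 0.
    by rewrite expr1n expr0n /=; lra.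
  by apply: MVT_le psi' _ => t t01; have := dev_le t t01; lra.
rewrite ler_norml; apply/andP; split.
  suff : -1 * (phi 1 - phi 0 - C) <= B / 2 by lra.
  by apply: signed_dev_le => t t01; have := dphi_near t t01; rewrite ler_norml => /andP[]; lra.
suff : 1 * (phi 1 - phi 0 - C) <= B / 2 by lra.
by apply: signed_dev_le => t t01; have := dphi_near t t01; rewrite ler_norml => /andP[]; lra.
Qed.

End MeanValue.

Section Gradient.
Variables (R : realType) (n : nat).
Implicit Types (S : set 'rV[R]_n) (F : 'rV[R]_n -> R) (G : 'rV[R]_n -> 'rV[R]_n).

Definition has_grad_on S F G :=
  forall z d, S z -> is_derive z d F (vdot (G z) d).

Definition lipschitz_on S G (L : R) :=
  forall z w, S z -> S w -> enorm (G z - G w) <= L * enorm (z - w).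

Lemma is_derive_line F a d (t D : R) :
  is_derive t 1 (fun s => F (s *: d + a)) D <-> is_derive (t *: d + a) d F D.
Proof.
have quotE : (fun h : R => h^-1 *: (((fun s => F (s *: d + a)) \o shift t) (h *: 1)
                                    - F (t *: d + a)))
           = (fun h : R => h^-1 *: ((F \o shift (t *: d + a)) (h *: d) - F (t *: d + a))).
  by apply: funext => h /=; rewrite [_%:A]mulr1 scalerDl addrA.
split=> -[der <-]; split.
- by move: der; rewrite /derivable quotE.
- by rewrite /derive quotE.
- by rewrite /derivable quotE.
- by rewrite /derive quotE.
Qed.

Lemma is_derive_grad F z d :
  differentiable F z -> is_derive z d F (vdot (grad F z) d).
Proof.
move=> dF; split; first exact: diff_derivable.
rewrite deriveE // /vdot mxE {1}(row_sum_delta d) linear_sum /=.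
apply: eq_bigr => j _; rewrite linearZ /= !mxE -deriveE //.
by rewrite /GRing.scale /= mulrC.
Qed.

Lemma has_grad_grad S F G z : has_grad_on S F G -> S z -> grad F z = G z.
Proof.
move=> FG Sz; apply/rowP => j; rewrite mxE (@derive_val _ _ _ _ _ _ _ (FG z _ Sz)).
by rewrite /vdot trmx_delta -colE mxE.
Qed.

Lemma has_grad_onB S F1 F2 G1 G2 :
  has_grad_on S F1 G1 -> has_grad_on S F2 G2 ->
  has_grad_on S (fun z => F1 z - F2 z) (fun z => G1 z - G2 z).
Proof.
move=> FG1 FG2 z d Sz.
by apply: is_derive_eq (is_deriveB (FG1 z d Sz) (FG2 z d Sz)) _; rewrite vdotBl.
Qed.

Lemma lipschitz_onB S G1 G2 L1 L2 :
  lipschitz_on S G1 L1 -> lipschitz_on S G2 L2 ->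
  lipschitz_on S (fun z => G1 z - G2 z) (L1 + L2).
Proof.
move=> lip1 lip2 z w Sz Sw.
have -> : G1 z - G2 z - (G1 w - G2 w) = (G1 z - G1 w) - (G2 z - G2 w).
  by apply/rowP => j; rewrite !mxE; ring.
apply: le_trans (enormD _ _) _; rewrite enormN mulrDl.
by apply: lerD; [exact: lip1 | exact: lip2].
Qed.

Lemma lipschitz_on_ball_ge0 S G L a (delta : R) :
  (0 < n)%N -> 0 < delta -> [set z | enorm (z - a) <= delta] `<=` S ->
  lipschitz_on S G L -> 0 <= L.
Proof.
move=> n_gt0 delta_gt0 ball_sub lip.
pose z := delta *: delta_mx 0 (Ordinal n_gt0) + a.
have za : enorm (z - a) = delta by rewrite addrK enormZ enorm_delta mulr1 gtr0_norm.
have aa : enorm (a - a) <= delta by rewrite subrr enorm0 ltW.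
have Sz : S z by apply: ball_sub; rewrite /= za.
have := lip z a Sz (ball_sub _ aa); rewrite za.
by move/(le_trans (enorm_ge0 _)); rewrite pmulr_lge0.
Qed.

Lemma taylor_lipschitz S F G (L : R) a b :
  (forall t : R, 0 <= t <= 1 -> S (t *: (b - a) + a)) ->
  has_grad_on S F G -> lipschitz_on S G L ->
  `|F b - F a - vdot (G a) (b - a)| <= L / 2 * enorm (b - a) ^+ 2.
Proof.
move=> seg FG lip; set d := b - a.
have Sa : S a by have := seg 0; rewrite scale0r add0r; apply; rewrite lexx ler01.
have := @MVT_linear_dev_le _ (fun s => F (s *: d + a)) (fun t => vdot (G (t *: d + a)) d)
  (vdot (G a) d) (L * enorm d ^+ 2).
rewrite scale1r scale0r add0r subrK mulrAC; apply.
  by move=> t t01; apply/is_derive_line; apply: FG; apply: seg.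
move=> t /andP[t_ge0 t_le1]; rewrite -vdotBl.
apply: le_trans (vdot_le _ _) _.
have -> : L * enorm d ^+ 2 * t = L * enorm (t *: d + a - a) * enorm d.
  by rewrite addrK enormZ ger0_norm //; ring.
by rewrite ler_wpM2r ?enorm_ge0 //; apply: lip => //; apply: seg; rewrite t_ge0.
Qed.

End Gradient.

Section QuadraticModel.
Variables (R : realType) (n : nat) (c : R) (g : 'rV[R]_n) (H : 'M[R]_n).
Hypothesis H_sym : H^T = H.

Lemma vdot_mulmx_sym u v : vdot (u *m H) v = vdot (v *m H) u.
Proof. by rewrite vdotC /vdot trmx_mul H_sym mulmxA. Qed.

Lemma quad_model_line z d (s : R) :
  quad_model c g H (s *: d + z) = quad_model c g H z
    + vdot (g + z *m H) d * s + 2^-1 * vdot (d *m H) d * s ^+ 2.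
Proof.
rewrite /quad_model -!/(vdot _ _) mulmxDl -scalemxAl.
rewrite vdotDr vdotZr !vdotDl !vdotDr !vdotZl !vdotZr (vdot_mulmx_sym d z).
by field.
Qed.

Lemma has_grad_quad_model (S : set 'rV[R]_n) :
  has_grad_on S (quad_model c g H) (fun z => g + z *m H).
Proof.
move=> z d _.
set A := vdot (g + z *m H) d; set B := 2^-1 * vdot (d *m H) d.
have line' : is_derive (0 : R) 1 (fun s => quad_model c g H (s *: d + z)) A.
  have -> : (fun s => quad_model c g H (s *: d + z))
            = (fun s => quad_model c g H z + A * s + B * s ^+ 2).
    by apply: funext => s; rewrite quad_model_line.
  apply: is_derive_eq (is_deriveD (is_deriveD (is_derive_cst _ _ _)
    (is_deriveZ A (is_derive_id _ _))) (is_deriveZ B (is_deriveX 2 (is_derive_id _ _)))) _.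
  by rewrite /GRing.scale /= expr0n /=; ring.
by move/is_derive_line: line'; rewrite scale0r add0r.
Qed.

Lemma grad_quad_model z : grad (quad_model c g H) z = g + z *m H.
Proof. by rewrite (has_grad_grad (has_grad_quad_model (S := setT))). Qed.

Lemma lipschitz_on_grad_quad_model (S : set 'rV[R]_n) (kappa_H : R) :
  specnorm H <= kappa_H -> lipschitz_on S (fun z => g + z *m H) kappa_H.
Proof.
move=> H_le z w _ _; rewrite opprD addrACA subrr add0r -mulmxBl.
apply: le_trans (enorm_mulmx_specnorm_tr _ _) _.
by rewrite H_sym ler_wpM2r ?enorm_ge0.
Qed.

End QuadraticModel.

Section ErrorOnBall.
Variables (R : realType) (n : nat) (S : set 'rV[R]_n) (F : 'rV[R]_n -> R).
Variables (G : 'rV[R]_n -> 'rV[R]_n) (M : R) (a : 'rV[R]_n) (delta : R).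
Hypotheses (F_grad : has_grad_on S F G) (G_lip : lipschitz_on S G M).
Hypotheses (M_ge0 : 0 <= M) (delta_ge0 : 0 <= delta).
Hypothesis ball_sub : [set z | enorm (z - a) <= delta] `<=` S.

Lemma ball_segment z w (t : R) :
  enorm (z - a) <= delta -> enorm (w - a) <= delta -> 0 <= t <= 1 ->
  enorm (t *: (w - z) + z - a) <= delta.
Proof.
move=> za wa /andP[t_ge0 t_le1].
have -> : t *: (w - z) + z - a = t *: (w - a) + (1 - t) *: (z - a).
  by apply/rowP => j; rewrite !mxE; ring.
apply: le_trans (enormD _ _) _; rewrite !enormZ !ger0_norm ?subr_ge0 //.
have : t * enorm (w - a) <= t * delta by rewrite ler_wpM2l.
have : (1 - t) * enorm (z - a) <= (1 - t) * delta by rewrite ler_wpM2l ?subr_ge0.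
lra.
Qed.

Lemma taylor_ball z w : enorm (z - a) <= delta -> enorm (w - a) <= delta ->
  `|F w - F z - vdot (G z) (w - z)| <= M / 2 * enorm (w - z) ^+ 2.
Proof.
move=> za wa; apply: taylor_lipschitz F_grad G_lip => t t01.
by apply: ball_sub; apply: ball_segment.
Qed.

Lemma center_in_ball : enorm (a - a) <= delta.
Proof. by rewrite subrr enorm0. Qed.

Lemma abs_le_center x : enorm (x - a) <= delta ->
  `|F x| <= `|F a| + enorm (G x) * delta + M / 2 * delta ^+ 2.
Proof.
move=> xa; have ax : enorm (a - x) <= delta by rewrite -enormN opprB.
have -> : F x = F a - vdot (G x) (a - x) - (F a - F x - vdot (G x) (a - x)) by ring.
apply: le_trans (ler_normB _ _) _; apply: lerD.
  apply: le_trans (ler_normB _ _) _; rewrite lerD2l.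
  by apply: le_trans (vdot_le _ _) _; rewrite ler_wpM2l ?enorm_ge0.
apply: le_trans (taylor_ball xa center_in_ball) _.
by rewrite ler_wpM2l ?divr_ge0 // lerXn2r ?nnegrE ?enorm_ge0.
Qed.

Lemma abs_vdot_grad_le x b (kappa : R) :
  enorm (x - a) <= delta -> enorm (b - a) <= delta ->
  `|F a| <= kappa * delta ^+ 2 -> `|F b| <= kappa * delta ^+ 2 ->
  `|vdot (G x) (b - a)| <= (2 * kappa + 3 / 2 * M) * delta ^+ 2.
Proof.
move=> xa ba Fa_le Fb_le.
have taylor := taylor_ball center_in_ball ba.
have lip : `|vdot (G x - G a) (b - a)| <= M * delta ^+ 2.
  apply: le_trans (vdot_le _ _) _; rewrite expr2 mulrA.
  apply: ler_pM; rewrite ?enorm_ge0 //.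
  apply: le_trans (G_lip (ball_sub xa) (ball_sub center_in_ball)) _.
  by rewrite ler_wpM2l.
have -> : vdot (G x) (b - a) = F b - F a - (F b - F a - vdot (G a) (b - a))
                              + vdot (G x - G a) (b - a) by rewrite vdotBl; ring.
apply: le_trans (ler_normD _ _) _; apply: le_trans (lerD (ler_normB _ _) lip) _.
apply: le_trans (lerD (lerD (ler_normB _ _) taylor) (lexx _)) _.
have : M / 2 * enorm (b - a) ^+ 2 <= M / 2 * delta ^+ 2.
  by rewrite ler_wpM2l ?divr_ge0 // lerXn2r ?nnegrE ?enorm_ge0.
lra.
Qed.

Lemma enorm_grad_le_samples p (b : 'I_p -> 'rV[R]_n) (P : 'M[R]_(n, p))
    (kappa kappa_s : R) x :
  P *m \matrix_i (delta^-1 *: (b i - a)) = 1%:M -> specnorm P <= kappa_s ->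
  0 <= kappa_s -> 0 <= kappa -> 0 < delta -> (forall i, enorm (b i - a) <= delta) ->
  `|F a| <= kappa * delta ^+ 2 -> (forall i, `|F (b i)| <= kappa * delta ^+ 2) ->
  enorm (x - a) <= delta ->
  enorm (G x) <= kappa_s * (Num.sqrt p%:R * ((2 * kappa + 3 / 2 * M) * delta)).
Proof.
move=> PD P_le ks_ge0 kappa_ge0 delta_gt0 b_ball Fa_le Fb_le xa.
apply: enorm_le_rows_vdot PD P_le ks_ge0 _ _ => [|i].
  by rewrite mulr_ge0 // addr_ge0 ?mulr_ge0 ?divr_ge0.
rewrite rowK vdotZr normrM ger0_norm ?invr_ge0 //.
have -> : (2 * kappa + 3 / 2 * M) * delta
          = delta^-1 * ((2 * kappa + 3 / 2 * M) * delta ^+ 2).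
  by rewrite expr2 mulrA mulrCA mulVf ?gt_eqF ?mulr1.
by rewrite ler_wpM2l ?invr_ge0 //; apply: abs_vdot_grad_le.
Qed.

End ErrorOnBall.

Theorem theorem2 (R : realType) (n p : nat)
  (f : 'rV[R]_n -> R) (X : set 'rV[R]_n) (Lc : R)
  (y : 'I_p.+1 -> 'rV[R]_n) (delta kappa kappa_s kappa_H : R)
  (c : R) (g : 'rV[R]_n) (H : 'M[R]_n) :
  (exists lb : R, forall x, lb <= f x) ->
  open X -> bounded_set X ->
  (forall x, X x -> differentiable f x) ->
  (forall x z, X x -> X z -> enorm (grad f x - grad f z) <= Lc * enorm (x - z)) ->
  (* X is "sufficiently large": it contains the closed ball B(y^0, delta) *)
  [set x | enorm (x - y ord0) <= delta] `<=` X ->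
  (n < p)%N -> (p < (n * n + 3 * n)./2)%N ->
  0 < delta ->
  (forall j, enorm (y j - y ord0) <= delta) ->
  H^T = H ->
  0 <= kappa ->
  (forall j, `|quad_model c g H (y j) - f (y j)| <= kappa * delta ^+ 2) ->
  let Ls : 'M[R]_(p, n) :=
    \matrix_(i < p, j < n) (y (lift ord0 i) 0 j - y ord0 0 j) in
  let Lhat := delta^-1 *: Ls in
  \rank Ls = n ->
  0 < kappa_s ->
  (forall P, is_MP_pinv Lhat P -> specnorm P <= kappa_s) ->
  0 <= kappa_H -> specnorm H <= kappa_H ->
  forall x, X x -> enorm (x - y ord0) <= delta ->
    `|f x - quad_model c g H x|
      <= (2^-1 * (Lc + kappa_H) + kappa
          + 2 * kappa_s * Num.sqrt (p%:R) * (Lc + kappa + 3 / 4 * kappa_H))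
         * delta ^+ 2
    /\
    enorm (grad f x - grad (quad_model c g H) x)
      <= 2 * kappa_s * Num.sqrt (p%:R) * (Lc + kappa + 3 / 4 * kappa_H) * delta.
Proof.
move=> _ _ _ f_diff f_lip ballX _ p_lt_q delta_gt0 y_ball H_sym kappa_ge0 y_fit
  Ls Lhat rkLs kappa_s_gt0 pinv_le kappaH_ge0 H_le x Xx x_ball.
set M := Lc + kappa_H; set e := fun z => f z - quad_model c g H z.
set Ge := fun z => grad f z - (g + z *m H).
have delta_ge0 := ltW delta_gt0; have kappa_s_ge0 := ltW kappa_s_gt0.
have n_gt0 : (0 < n)%N by move: p_lt_q; case: (n).
have Lc_ge0 : 0 <= Lc := lipschitz_on_ball_ge0 n_gt0 delta_gt0 ballX f_lip.
have M_ge0 : 0 <= M by rewrite addr_ge0.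
have f_grad : has_grad_on X f (grad f) by move=> z d /f_diff; apply: is_derive_grad.
have e_grad : has_grad_on X e Ge :=
  has_grad_onB f_grad (has_grad_quad_model c g H_sym (S := X)).
have Ge_lip : lipschitz_on X Ge M :=
  lipschitz_onB f_lip (lipschitz_on_grad_quad_model g H_sym H_le).
have e_fit j : `|e (y j)| <= kappa * delta ^+ 2 by rewrite /e distrC.
have [P [P_pinv PLhat]] : exists P, is_MP_pinv Lhat P /\ P *m Lhat = 1%:M.
  by apply: pinv_full_col_rank; rewrite mxrank_scale_nz ?invr_eq0 ?gt_eqF.
have Lhat_rows : Lhat = \matrix_i (delta^-1 *: (y (lift ord0 i) - y ord0)).
  by apply/matrixP => i j; rewrite !mxE.
have Ge_le : enorm (Ge x)
    <= 2 * kappa_s * Num.sqrt p%:R * (Lc + kappa + 3 / 4 * kappa_H) * delta.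
  rewrite Lhat_rows in PLhat.
  apply: le_trans (enorm_grad_le_samples e_grad Ge_lip M_ge0 delta_ge0 ballX PLhat
    (pinv_le P P_pinv) kappa_s_ge0 kappa_ge0 delta_gt0 (fun i => y_ball _) (e_fit ord0)
    (fun i => e_fit _) x_ball) _.
  rewrite [X in _ <= X](_ : _ = kappa_s * (Num.sqrt p%:R
    * (2 * (Lc + kappa + 3 / 4 * kappa_H) * delta))); last by ring.
  by rewrite !ler_wpM2l ?sqrtr_ge0 // ler_wpM2r // /M; lra.
split; last by rewrite grad_quad_model.
have := abs_le_center e_grad Ge_lip M_ge0 delta_ge0 ballX x_ball.
have := ler_wpM2r delta_ge0 Ge_le; have := e_fit ord0.
rewrite /e /M; lra.
Qed.
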